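(* Let $\{B_n(\mathbf{t})\}_{n\in\mathbb{N}}$ be a solution of the Volterra lattice hierarchy $$\partial_{t_{2k}}B_n=B_n\big(V^{(2k)}_{n+1}-V^{(2k)}_{n-1}\big),$$ with $V^{(2)}_n=B_n$, $V^{(4)}_n=V^{(2)}_n\big(V^{(2)}_{n-1}+V^{(2)}_n+V^{(2)}_{n+1}\big)$, $V^{(6)}_n=V^{(2)}_n\big(V^{(2)}_{n-1}V^{(2)}_{n+1}+V^{(4)}_{n-1}+V^{(4)}_n+V^{(4)}_{n+1}\big)$. For a given $n\in\mathbb{N}$ let $\phi(\mathbf{t})=B_n(\mathbf{t})$ and write $x=t_2$, $y=t_4$, $t=t_6$. Then $\phi$ satisfies the modified Kadomtsev–Petviashvili equation $$4\phi_t=6\phi_x\big(\xi-\phi^2\big)+\phi_{xxx}+3\xi_y,\qquad \phi_y=\xi_x,$$ for a function $\xi$ (namely $\xi=\partial_y\partial_x^{-1}\phi$).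
   Context: $\mathbf{t}=(t_2,t_4,t_6,\dots)$ are the even coupling constants; subscripts denote partial derivatives; $\partial_x^{-1}$ denotes an $x$-antiderivative. *)

From Stdlib Require Import Reals ZArith.
From Coquelicot Require Import Coquelicot.
Open Scope R_scope.

(* A lattice field: B m x y t = B_m(t_2 = x, t_4 = y, t_6 = t), m : Z. *)
Definition lattice := Z -> R -> R -> R -> R.

Definition V2 (B : lattice) (m : Z) (x y t : R) : R := B m x y t.

Definition V4 (B : lattice) (m : Z) (x y t : R) : R :=
  V2 B m x y t * (V2 B (m - 1)%Z x y t + V2 B m x y t + V2 B (m + 1)%Z x y t).

Definition V6 (B : lattice) (m : Z) (x y t : R) : R :=
  V2 B m x y t * (V2 B (m - 1)%Z x y t * V2 B (m + 1)%Z x y t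
                  + V4 B (m - 1)%Z x y t + V4 B m x y t + V4 B (m + 1)%Z x y t).

Definition volterra_solution (B : lattice) : Prop :=
  forall (m : Z) (x y t : R),
    is_derive (fun x' => B m x' y t) x
      (B m x y t * (V2 B (m + 1)%Z x y t - V2 B (m - 1)%Z x y t)) /\
    is_derive (fun y' => B m x y' t) y
      (B m x y t * (V4 B (m + 1)%Z x y t - V4 B (m - 1)%Z x y t)) /\
    is_derive (fun t' => B m x y t') t
      (B m x y t * (V6 B (m + 1)%Z x y t - V6 B (m - 1)%Z x y t)).

(** Take ξ := V^{(4)}_n.  The hierarchy is invariant under the shift
    B_m ↦ B_{n+m}, so we may assume n = 0.  Each flow expresses ∂B_m as a
    polynomial in the neighbouring B_j, hence φ_y, ξ_x, ξ_y, φ_t and φ_xxx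
    are all polynomials in B_{-3}, …, B_3, and both equations of the mKP
    system become polynomial identities. *)
From Stdlib Require Import Reals ZArith Lia.
From Coquelicot Require Import Coquelicot.
Open Scope R_scope.

Definition shift_lattice (n : Z) (B : lattice) : lattice := fun m => B (n + m)%Z.

Lemma V2_shift n B m x y t : V2 (shift_lattice n B) m x y t = V2 B (n + m) x y t.
Proof. reflexivity. Qed.

Lemma V4_shift n B m x y t : V4 (shift_lattice n B) m x y t = V4 B (n + m) x y t.
Proof. unfold V4, V2, shift_lattice. now rewrite !Z.add_sub_assoc, Z.add_assoc. Qed.

Lemma V6_shift n B m x y t : V6 (shift_lattice n B) m x y t = V6 B (n + m) x y t.
Proof.
  unfold V6. rewrite !V4_shift, !V2_shift.
  now rewrite !Z.add_sub_assoc, Z.add_assoc.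
Qed.

Lemma volterra_solution_shift n B :
  volterra_solution B -> volterra_solution (shift_lattice n B).
Proof.
  intros HB m x y t.
  rewrite !V2_shift, !V4_shift, !V6_shift, !Z.add_sub_assoc, Z.add_assoc.
  exact (HB (n + m)%Z x y t).
Qed.

Section SiteZero.

Variable B : lattice.
Hypothesis HB : volterra_solution B.

Lemma is_derive_lattice_x m x y t :
  is_derive (fun x' => B m x' y t) x
    (B m x y t * (B (m + 1)%Z x y t - B (m - 1)%Z x y t)).
Proof. exact (proj1 (HB m x y t)). Qed.

Lemma is_derive_lattice_y m x y t :
  is_derive (fun y' => B m x y' t) y
    (B m x y t * (V4 B (m + 1) x y t - V4 B (m - 1) x y t)).
Proof. exact (proj1 (proj2 (HB m x y t))). Qed.

Lemma is_derive_lattice_t m x y t :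
  is_derive (fun t' => B m x y t') t
    (B m x y t * (V6 B (m + 1) x y t - V6 B (m - 1) x y t)).
Proof. exact (proj2 (proj2 (HB m x y t))). Qed.

Lemma Derive_lattice_x m x y t :
  Derive (fun x' => B m x' y t) x
  = B m x y t * (B (m + 1)%Z x y t - B (m - 1)%Z x y t).
Proof. exact (is_derive_unique _ _ _ (is_derive_lattice_x m x y t)). Qed.

Lemma Derive_lattice_y m x y t :
  Derive (fun y' => B m x y' t) y
  = B m x y t * (V4 B (m + 1) x y t - V4 B (m - 1) x y t).
Proof. exact (is_derive_unique _ _ _ (is_derive_lattice_y m x y t)). Qed.

Lemma Derive_lattice_t m x y t :
  Derive (fun t' => B m x y t') t
  = B m x y t * (V6 B (m + 1) x y t - V6 B (m - 1) x y t).
Proof. exact (is_derive_unique _ _ _ (is_derive_lattice_t m x y t)). Qed.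

(* Dispatching on the varying argument matters: trying [apply] with the wrong
   flow makes unification unfold [is_derive] and hang. *)
Ltac lattice_ex_derive :=
  repeat split; eexists;
  lazymatch goal with
  | |- is_derive (fun z => B _ z _ _) _ _ => apply is_derive_lattice_x
  | |- is_derive (fun z => B _ _ z _) _ _ => apply is_derive_lattice_y
  | |- is_derive (fun z => B _ _ _ z) _ _ => apply is_derive_lattice_t
  end.

(* [simpl] evaluates site arithmetic such as [(1 + 1)%Z], so that [ring]
   sees each [B j] at a literal site [j] as a single atom. *)
Ltac expand_lattice_derivatives :=
  repeat match goal with
  | |- context [Derive ?f ?p] =>
      erewrite (is_derive_unique f p)
        by (unfold V4, V2; auto_derive; [lattice_ex_derive |];
            rewrite ?Derive_lattice_x, ?Derive_lattice_y, ?Derive_lattice_t;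
            reflexivity)
  end;
  unfold V6, V4, V2; simpl.

Lemma Derive2_site_x y t x :
  Derive (Derive (fun x' => B 0%Z x' y t)) x =
    B 0%Z x y t * (B 1%Z x y t - B (-1)%Z x y t) ^ 2
    + B 0%Z x y t * (B 1%Z x y t * (B 2%Z x y t - B 0%Z x y t)
                     - B (-1)%Z x y t * (B 0%Z x y t - B (-2)%Z x y t)).
Proof.
  rewrite (Derive_ext _ _ _ (fun z => Derive_lattice_x 0 z y t)).
  expand_lattice_derivatives. ring.
Qed.

Lemma ex_derive_n_site_x y t x k :
  (k <= 3)%nat -> ex_derive_n (fun x' => B 0%Z x' y t) k x.
Proof.
  intros Hk. destruct k as [| [| [| [| k]]]]; simpl.
  - exact I.
  - lattice_ex_derive.
  - apply (ex_derive_ext _ _ _ (fun z => eq_sym (Derive_lattice_x 0 z y t))).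
    auto_derive. lattice_ex_derive.
  - apply (ex_derive_ext _ _ _ (fun z => eq_sym (Derive2_site_x y t z))).
    auto_derive. lattice_ex_derive.
  - lia.
Qed.

Lemma ex_derive_V4_site_x y t x : ex_derive (fun x' => V4 B 0 x' y t) x.
Proof. unfold V4, V2. auto_derive. lattice_ex_derive. Qed.

Lemma ex_derive_V4_site_y x t y : ex_derive (fun y' => V4 B 0 x y' t) y.
Proof. unfold V4, V2. auto_derive. lattice_ex_derive. Qed.

Lemma Derive_site_y_eq_Derive_V4_x x y t :
  Derive (fun y' => B 0%Z x y' t) y = Derive (fun x' => V4 B 0 x' y t) x.
Proof. expand_lattice_derivatives. ring. Qed.

Lemma mKP_site x y t :
  4 * Derive (fun t' => B 0%Z x y t') t =
    6 * Derive (fun x' => B 0%Z x' y t) x * (V4 B 0 x y t - (B 0%Z x y t) ^ 2)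
    + Derive_n (fun x' => B 0%Z x' y t) 3 x
    + 3 * Derive (fun y' => V4 B 0 x y' t) y.
Proof.
  change (Derive_n ?f 3 x) with (Derive (Derive (Derive f)) x).
  rewrite (Derive_ext _ _ _ (Derive2_site_x y t)).
  expand_lattice_derivatives. ring.
Qed.

End SiteZero.

Theorem theorem2p4 (B : lattice) (n : Z) :
  volterra_solution B ->
  exists xi : R -> R -> R -> R,
    forall x y t : R,
      (forall k : nat, (k <= 3)%nat -> ex_derive_n (fun x' => B n x' y t) k x) /\
      ex_derive (fun x' => xi x' y t) x /\
      ex_derive (fun y' => xi x y' t) y /\
      (* phi_y = xi_x *)
      Derive (fun y' => B n x y' t) y = Derive (fun x' => xi x' y t) x /\
      (* 4 phi_t = 6 phi_x (xi - phi^2) + phi_xxx + 3 xi_y *)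
      4 * Derive (fun t' => B n x y t') t =
        6 * Derive (fun x' => B n x' y t) x * (xi x y t - (B n x y t) ^ 2)
        + Derive_n (fun x' => B n x' y t) 3 x
        + 3 * Derive (fun y' => xi x y' t) y.
Proof.
  intros HB.
  pose proof (volterra_solution_shift n B HB) as HBn.
  (* [B (n + 0)] is [shift_lattice n B 0] up to conversion. *)
  rewrite <- (Z.add_0_r n).
  exists (V4 (shift_lattice n B) 0).
  intros x y t.
  split; [| split; [| split; [| split]]].
  - exact (ex_derive_n_site_x _ HBn y t x).
  - exact (ex_derive_V4_site_x _ HBn y t x).
  - exact (ex_derive_V4_site_y _ HBn x t y).
  - exact (Derive_site_y_eq_Derive_V4_x _ HBn x y t).
  - exact (mKP_site _ HBn x y t).
Qed.
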